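(* Let $(V,h)$ be an object of $\mathrm{Herm}(\mathrm{sVect})$ whose Hermitian pairing has signature $(p_1,p_2,p_3,p_4)$. Then the dual super Hermitian vector space $V^*$, equipped with the dual Hermitian pairing, has signature $(p_1,p_2,p_4,p_3)$.
   Context: $\mathrm{sVect}$: finite-dimensional complex $\mathbb{Z}/2$-graded vector spaces with even linear maps, graded tensor product and Koszul braiding $v\otimes w\mapsto(-1)^{|v||w|}w\otimes v$. $V^*$ is the graded space of all linear functionals, $T^*(f)=f\circ T$, with evaluation $f\otimes v\mapsto f(v)$; this is the chosen dual functor. Anti-involution $dV=\overline{V}^*$ (identified with $\overline{V^*}$ by $\bar f(\bar v)=\overline{f(v)}$), monoidal structure $\chi(\bar f\otimes\bar g)(\bar v\otimes\bar w)=(-1)^{|g||v|}\overline{f(v)g(w)}$, $\eta_V(v)=\Phi_v$ with $\Phi_v(f)=(-1)^{|f||v|}f(v)$. $\mathrm{Herm}(\mathrm{sVect})$: objects $(V,h)$ with $h\colon V\to dV$ an even isomorphism with $d(h)\circ\eta_V=h$; equivalently $V$ with a nondegenerate sesquilinear form $\langle\cdot,\cdot\rangle$, $V_0\perp V_1$, $\langle v,w\rangle=(-1)^{|v||w|}\overline{\langle w,v\rangle}$. An orthonormal basis is a homogeneous basis $e_1,\dots,e_n$ with $\langle e_i,e_j\rangle=\delta_{ij}\langle e_j,e_j\rangle$ and $\langle e_j,e_j\rangle\in\{\pm1,\pm i\}$; the signature $(p_1,p_2,p_3,p_4)$ counts the $j$ with $\langle e_j,e_j\rangle$ equal to $+1,-1,+i,-i$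 respectively. The dual Hermitian pairing on $V^*$ is the composite $V^*\xrightarrow{(h^* )^{-1}}(dV)^*\cong d(V^* )$, where the last isomorphism is the canonical uniqueness-of-duals isomorphism (both are duals of $dV$, using that $d$ is symmetric monoidal). *)

From HB Require Import structures.
From mathcomp Require Import all_boot all_order all_algebra.
From mathcomp Require Import complex.
From mathcomp Require Import reals.

Set Implicit Arguments.
Unset Strict Implicit.
Unset Printing Implicit Defensive.

Import Order.TTheory GRing.Theory Num.Theory.
Local Open Scope ring_scope.

Section SuperHermitian.
Variable C : numClosedFieldType.

(* A Z/2-graded space is a finite-dimensional C-vector space W together with
   its even part and odd part, given as predicates [W0] and [W1].  A vector is
   homogeneous if it lies in W0 or W1. *)

Definition gpart (W : Type) (W0 W1 : W -> Prop) (b : bool) : W -> Prop :=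
  if b then W1 else W0.

Definition superHermitian (V : vectType C) (V0 V1 : {vspace V})
    (B : V -> V -> C) : Prop :=
  [/\ (forall a v v' w, B (a *: v + v') w = a * B v w + B v' w),
      (forall a v w w', B v (a *: w + w') = a^* * B v w + B v w'),
      (forall v, (forall w, B v w = 0) -> v = 0),
      (forall v w, v \in V0 -> w \in V1 -> B v w = 0 /\ B w v = 0) &
      (forall (a b : bool) v w,
         gpart (fun x => x \in V0) (fun x => x \in V1) a v ->
         gpart (fun x => x \in V0) (fun x => x \in V1) b w ->
         B v w = (-1) ^+ (a && b) * (B w v)^*)].

Definition has_signature (W : vectType C) (W0 W1 : W -> Prop)
    (Q : W -> W -> C) (p1 p2 p3 p4 : nat) : Prop :=
  exists e : seq W,
    [/\ basis_of fullv e,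
        (forall x, x \in e -> W0 x \/ W1 x),
        (forall i j, (i < size e)%N -> (j < size e)%N -> i != j ->
             Q e`_i e`_j = 0),
        (forall x, x \in e -> Q x x \in [:: 1; -1; 'i; - 'i]) &
        [/\ p1 = count (fun x => Q x x == 1) e,
            p2 = count (fun x => Q x x == -1) e,
            p3 = count (fun x => Q x x == 'i) e &
            p4 = count (fun x => Q x x == - 'i) e]].

(* The dual super vector space V^* : all linear functionals on V, graded by
   degree (C is purely even): a functional is even iff it kills V1 and odd
   iff it kills V0. *)
Definition dualSpace (V : vectType C) := 'Hom(V, C^o).

Definition dual_even (V : vectType C) (V1 : {vspace V}) (f : dualSpace V) : Prop :=
  forall v, v \in V1 -> f v = 0.
Definition dual_odd (V : vectType C) (V0 : {vspace V}) (f : dualSpace V) : Prop :=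
  forall v, v \in V0 -> f v = 0.

(* The dual Hermitian pairing on V^*, i.e. the pairing associated with the
   composite V^* --(h^* )^{-1}--> (dV)^* ~= d(V^* ), where h v = <v, .> in dV.
   Unfolding the definitions, the canonical isomorphism
   (dV)^* ~= d(V^* ) is the identity once dV = conj(V)^* is identified with
   conj(V^* ), and one gets:  <f, g>_* = F(conj g) with F o h = f, i.e.
   <f, g>_* = f v  whenever  h v = conj g,  i.e.  g u = conj <v, u> for all u.
   Since h is bijective this determines <.,.>_* uniquely. *)
Definition is_dual_pairing (V : vectType C) (B : V -> V -> C)
    (Bs : dualSpace V -> dualSpace V -> C) : Prop :=
  forall (f g : dualSpace V) (v : V),
    (forall u, g u = (B v u)^*) -> Bs f g = f v.

End SuperHermitian.

(** The conjugate-linear Riesz map [flat v := conj <v, .>] satisfies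
    [<flat v, flat w>_* = conj <v, w>].  Hence it sends an orthonormal basis
    of [V] to a family of homogeneous functionals of the same degrees that is
    biorthogonal to the basis (so a basis of [V^*]), orthogonal, and whose
    norms are the conjugated norms; conjugation fixes [1] and [-1] and swaps
    [i] and [-i]. *)

From HB Require Import structures.
From mathcomp Require Import all_boot all_order all_algebra.
From mathcomp Require Import complex.
From mathcomp Require Import reals.

Set Implicit Arguments.
Unset Strict Implicit.
Unset Printing Implicit Defensive.

Import GRing.Theory Num.Theory.
Local Open Scope ring_scope.

Lemma free_biorthogonal (K : fieldType) (V : vectType K)
    (f : seq 'Hom(V, K^o)) (e : seq V) :
  size f = size e ->
  (forall i j, (i < size f)%N -> (j < size f)%N ->
     (f`_i e`_j == 0) = (i != j)) ->
  free f.
Proof.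
move=> size_fe fe0; change (free (in_tuple f)); apply/freeP => k sum_k0 i.
have /eqP := congr1 (fun g : 'Hom(V, K^o) => g e`_i) sum_k0.
rewrite sum_lfunE zero_lfunE (bigD1 i) //= big1 => [|j ji].
  by rewrite scale_lfunE addr0 mulf_eq0 fe0 // eqxx orbF => /eqP.
by apply/eqP; rewrite scale_lfunE scaler_eq0 fe0 //; apply/orP; right.
Qed.

Lemma biorthogonal_basis (K : fieldType) (V : vectType K)
    (f : seq 'Hom(V, K^o)) (e : seq V) :
  basis_of fullv e -> size f = size e ->
  (forall i j, (i < size f)%N -> (j < size f)%N ->
     (f`_i e`_j == 0) = (i != j)) ->
  basis_of fullv f.
Proof.
rewrite !basisEfree !subvf => /and3P[_ _ dim_e] size_fe fe0.
rewrite (free_biorthogonal size_fe fe0) size_fe dimvf.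
by change (dim V * 1 <= size e)%N; rewrite muln1 -dimvf.
Qed.

Lemma conjC_eqE (C : numClosedFieldType) (z w : C) : (z^* == w) = (z == w^*).
Proof. by apply/eqP/eqP => [<- | ->]; rewrite conjCK. Qed.

Section UnitNorms.
Variable C : numClosedFieldType.

Definition unit_norms : seq C := [:: 1; -1; 'i; - 'i].

Lemma unit_norm_neq0 (z : C) : z \in unit_norms -> z != 0.
Proof.
by rewrite !inE => /or4P[] /eqP ->; rewrite ?oppr_eq0 ?oner_eq0 ?neq0Ci.
Qed.

Lemma conjCNi : (- 'i)^* = 'i :> C.
Proof. by rewrite rmorphN /= conjCi opprK. Qed.

Lemma conjC_unit_norm (z : C) : z \in unit_norms -> z^* \in unit_norms.
Proof.
by rewrite !inE => /or4P[] /eqP ->; rewrite ?conjC1 ?conjCN1 ?conjCi ?conjCNi eqxx ?orbT.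
Qed.

End UnitNorms.

Section RieszMap.
Variables (C : numClosedFieldType) (V : vectType C) (B : V -> V -> C).
Hypothesis B_semilinear : forall a v w w', B v (a *: w + w') = a^* * B v w + B v w'.

Section Flat.
Variable v : V.

Definition flat_fun (u : V) : C^o := (B v u)^*.

Fact flat_fun_linear : linear flat_fun.
Proof. by move=> a u w; rewrite /flat_fun B_semilinear rmorphD rmorphM /= conjCK. Qed.

HB.instance Definition _ := GRing.isLinear.Build C V C^o *:%R flat_fun flat_fun_linear.

Definition flat : dualSpace V := linfun flat_fun.

Lemma flatE u : flat u = (B v u)^*.
Proof. by rewrite lfunE. Qed.

End Flat.

Lemma dual_pairing_flat Bs : is_dual_pairing B Bs ->
  forall v w, Bs (flat v) (flat w) = (B v w)^*.
Proof. by move=> Bs_dual v w; rewrite (Bs_dual _ _ w) ?flatE // => u; rewrite flatE. Qed.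

Variables V0 V1 : {vspace V}.
Hypothesis V0_orth_V1 :
  forall v w, v \in V0 -> w \in V1 -> B v w = 0 /\ B w v = 0.

Lemma flat_even v : v \in V0 -> dual_even V1 (flat v).
Proof. by move=> v0 u u1; rewrite flatE (V0_orth_V1 v0 u1).1 conjC0. Qed.

Lemma flat_odd v : v \in V1 -> dual_odd V0 (flat v).
Proof. by move=> v1 u u0; rewrite flatE (V0_orth_V1 u0 v1).2 conjC0. Qed.

End RieszMap.

Theorem mainTheorem16 (R : realType) (V : vectType R[i]) (V0 V1 : {vspace V})
    (B : V -> V -> R[i]) (Bs : dualSpace V -> dualSpace V -> R[i])
    (p1 p2 p3 p4 : nat) :
  (V0 + V1)%VS = fullv -> directv (V0 + V1) ->
  superHermitian V0 V1 B ->
  has_signature (fun v => v \in V0) (fun v => v \in V1) B p1 p2 p3 p4 ->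
  is_dual_pairing B Bs ->
  has_signature (dual_even V1) (dual_odd V0) Bs p1 p2 p4 p3.
Proof.
move=> _ _ [_ B_semilin _ V0_orth_V1 _].
move=> [e [e_basis e_hom e_orth e_unit [-> -> -> ->]]] Bs_dual.
have BsE := dual_pairing_flat B_semilin Bs_dual.
have count_conj c : count (fun x => Bs x x == c) (map (flat B) e)
                  = count (fun x => B x x == c^*) e.
  by rewrite count_map; apply: eq_count => x /=; rewrite BsE conjC_eqE.
exists (map (flat B) e); split.
- apply: biorthogonal_basis e_basis _ _; rewrite size_map // => i j ie je.
  rewrite (nth_map 0) // (flatE B_semilin) conjC_eq0.
  have [<- | ij] := eqVneq i j; last by rewrite e_orth // eqxx.
  exact/negbTE/unit_norm_neq0/e_unit/mem_nth.
- move=> _ /mapP[v ve ->]; have [v0 | v1] := e_hom v ve.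
    by left; exact (flat_even B_semilin V0_orth_V1 v0).
  by right; exact (flat_odd B_semilin V0_orth_V1 v1).
- by rewrite size_map => i j ie je ij; rewrite !(nth_map 0) // BsE e_orth ?conjC0.
- by move=> _ /mapP[v ve ->]; rewrite BsE; apply/conjC_unit_norm/e_unit.
- split; rewrite count_conj.
  + by rewrite conjC1.
  + by rewrite conjCN1.
  + by rewrite conjCi.
  + by rewrite conjCNi.
Qed.
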